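(* Let $G=(V,q)$ be a reversible connected graph. Then there exists a perfect coupling graph of $G$.
   Context: A graph $G=(V,q)$ consists of a countable set $V$ and a function $q:V\times V\to[0,\infty)$ such that $\#\{y:q(x,y)>0\}<\infty$ for every $x\in V$; its Laplacian is $\Delta f(x)=\sum_y q(x,y)(f(y)-f(x))$. $G$ is reversible if there is $m:V\to(0,\infty)$ with $q(x,y)m(x)=q(y,x)m(y)$. For reversible $G$, $x\sim y$ means $q(x,y)>0$ and $d$ is the combinatorial graph distance (finite since $G$ is connected). $q_{\min}:=\inf\{q(x,y):q(x,y)>0\}$. $(f\otimes g)(x,y)=f(x)g(y)$. A graph $\widetilde G=(V\times V,\widetilde q)$ with Laplacian $\widetilde\Delta$ is a coupling graph of $G$ if $\widetilde\Delta(f\otimes 1)=\Delta f\otimes 1$ and $\widetilde\Delta(1\otimes f)=1\otimes\Delta f$ for all $f:V\to\mathbb R$. A transport plan from $x_0$ to $y_0$ is $\rho:V\times V\to[0,\infty)$ with $\sum_{y}\rho(x,y)=q(x_0,x)$ for $x\neq x_0$ and $\sum_x\rho(x,y)=q(y_0,y)$ for $y\ne y_0$; $\mathrm{cost}(\rho)=\sum_{x,y}\rho(x,y)(d(x_0,y_0)-d(x,y))$; $\mu_\rho(k)=\sum_{d(x,y)-d(x_0,y_0)=k}\rho(x,y)$; $\rho$ is optimal if it maximizes cost among transport plans from $x_0$ to $y_0$. A coupling graph $\widetilde G$ is perfect if for all $x_0,y_0\in V$ the plan $\rho_{x_0y_0}:=\widetilde q((x_0,y_0),(\cdot,\cdot))$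 is an optimal transport plan from $x_0$ to $y_0$, satisfies $\mu_{\rho_{x_0y_0}}(k)=0$ whenever $|k|>1$, and satisfies $\mu_{\rho_{x_0y_0}}(-1)\ge 2q_{\min}$ whenever $x_0\ne y_0$. *)

From Stdlib Require Import Reals List Classical ClassicalEpsilon.
Import ListNotations.
Open Scope R_scope.

Definition has_fin_supp {T : Type} (F : T -> R) : Prop :=
  exists l : list T, forall t, F t <> 0 -> In t l.

Definition is_finsum {T : Type} (F : T -> R) (s : R) : Prop :=
  exists l : list T, NoDup l /\ (forall t, F t <> 0 -> In t l) /\
                     s = fold_right Rplus 0 (map F l).

(* [finsum F] = sum_t F t  (meaningful when F has finite support; this value
   does not depend on the chosen covering list). *)
Definition finsum {T : Type} (F : T -> R) : R :=
  epsilon (inhabits 0) (is_finsum F).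

Definition countable (V : Type) : Prop :=
  exists enc : V -> nat, forall x y, enc x = enc y -> x = y.

Definition is_graph {V : Type} (q : V -> V -> R) : Prop :=
  (forall x y, 0 <= q x y) /\ (forall x, has_fin_supp (q x)).

Definition laplacian {V : Type} (q : V -> V -> R) (f : V -> R) (x : V) : R :=
  finsum (fun y => q x y * (f y - f x)).

Definition reversible {V : Type} (q : V -> V -> R) : Prop :=
  exists m : V -> R, (forall x, 0 < m x) /\
    (forall x y, q x y * m x = q y x * m y).

Inductive walk {V : Type} (q : V -> V -> R) : V -> V -> nat -> Prop :=
| walk0 : forall x, walk q x x 0
| walkS : forall x y z n, 0 < q x y -> walk q y z n -> walk q x z (S n).

Definition connected {V : Type} (q : V -> V -> R) : Prop :=
  forall x y, exists n, walk q x y n.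

Definition dist {V : Type} (q : V -> V -> R) (x y : V) : nat :=
  epsilon (inhabits 0%nat)
    (fun n => walk q x y n /\ forall m, walk q x y m -> (n <= m)%nat).

Definition is_glb (S : R -> Prop) (m : R) : Prop :=
  (forall s, S s -> m <= s) /\ (forall b, (forall s, S s -> b <= s) -> b <= m).

Definition qmin {V : Type} (q : V -> V -> R) : R :=
  epsilon (inhabits 0) (is_glb (fun r => exists x y, 0 < q x y /\ r = q x y)).

Definition tensor {V : Type} (f g : V -> R) : V * V -> R :=
  fun p => f (fst p) * g (snd p).

Definition is_coupling_graph {V : Type} (q : V -> V -> R)
    (qt : V * V -> V * V -> R) : Prop :=
  is_graph qt /\
  (forall f : V -> R,
     laplacian qt (tensor f (fun _ => 1)) = tensor (laplacian q f) (fun _ => 1)) /\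
  (forall f : V -> R,
     laplacian qt (tensor (fun _ => 1) f) = tensor (fun _ => 1) (laplacian q f)).

(* rho : V x V -> [0,oo) (finitely supported, as the sums are finite sums) *)
Definition transport_plan {V : Type} (q : V -> V -> R) (x0 y0 : V)
    (rho : V -> V -> R) : Prop :=
  (forall x y, 0 <= rho x y) /\
  has_fin_supp (fun p : V * V => rho (fst p) (snd p)) /\
  (forall x, x <> x0 -> finsum (fun y => rho x y) = q x0 x) /\
  (forall y, y <> y0 -> finsum (fun x => rho x y) = q y0 y).

Definition cost {V : Type} (q : V -> V -> R) (x0 y0 : V)
    (rho : V -> V -> R) : R :=
  finsum (fun p : V * V =>
    rho (fst p) (snd p) * (INR (dist q x0 y0) - INR (dist q (fst p) (snd p)))).

Definition mu {V : Type} (q : V -> V -> R) (x0 y0 : V)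
    (rho : V -> V -> R) (k : Z) : R :=
  finsum (fun p : V * V =>
    if Z.eq_dec (Z.of_nat (dist q (fst p) (snd p)) - Z.of_nat (dist q x0 y0))%Z k
    then rho (fst p) (snd p) else 0).

Definition optimal_plan {V : Type} (q : V -> V -> R) (x0 y0 : V)
    (rho : V -> V -> R) : Prop :=
  transport_plan q x0 y0 rho /\
  forall rho', transport_plan q x0 y0 rho' -> cost q x0 y0 rho' <= cost q x0 y0 rho.

Definition perfect_coupling {V : Type} (q : V -> V -> R)
    (qt : V * V -> V * V -> R) : Prop :=
  is_coupling_graph q qt /\
  forall x0 y0 : V,
    let rho := fun x y => qt (x0, y0) (x, y) in
    optimal_plan q x0 y0 rho /\
    (forall k : Z, (Z.abs k > 1)%Z -> mu q x0 y0 rho k = 0) /\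
    (x0 <> y0 -> mu q x0 y0 rho (-1)%Z >= 2 * qmin q).

(* For each pair (x0, y0) we must produce one row qt((x0,y0), .) of the
   coupling.  All transport plans from x0 to y0 live on the finite set
   Supp = N(x0) x N(y0), where N(x) is x together with its neighbours, so
   an optimal plan is the maximiser of a linear functional over a bounded
   polytope in a finite-dimensional space; it exists by compactness
   (module LinearProgram, the only place using MathComp-Analysis).

   An optimal plan rho need not have the required distance profile, so we
   reroute it: every pair (a, b) with a <> x0, b <> y0 that either moves
   the distance by more than one, or has a = y1 or b = x1 (y1, x1 the first
   steps of geodesics x0 -> y0 and y0 -> x0), sends its mass to (a, y0)
   and (x0, b) instead.  This keeps both marginals, does not decrease the
   cost (triangle inequality), leaves only distance changes in {-1, 0, 1},
   and concentrates the rows of y1 and x1 on pairs with distance change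
   -1, which gives mu(-1) >= q(x0,y1) + q(y0,x1) >= 2 q_min.  Since the
   rerouted plan has the marginals of q(x0,.) and q(y0,.), the Laplacian
   identities of a coupling graph hold, and choosing such a row for every
   pair yields the perfect coupling graph. *)

From Stdlib Require Import Reals List Lia Lra Classical ClassicalEpsilon
  FunctionalExtensionality Permutation ZArith.
(* Imported last so that [dist] denotes the graph distance of Defs. *)
From Pilot Require Import Defs.

Definition lsum {T : Type} (l : list T) (f : T -> R) : R :=
  fold_right Rplus 0%R (map f l).

Definition lp_feasible {T J : Type} (l : list T) (A : J -> T -> R) (b : J -> R)
    (rho : T -> R) : Prop :=
  (forall t, In t l -> Rle R0 (rho t)) /\ (forall t, ~ In t l -> rho t = R0) /\
  (forall j, lsum l (fun t => Rmult (A j t) (rho t)) = b j).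

From mathcomp Require all_boot all_order all_algebra all_classical all_reals
  all_analysis Rstruct Rstruct_topology.

(* Existence of optimal solutions of bounded linear programs, by the extreme
   value theorem on the compact feasible polytope. *)
Module LinearProgram.
Import all_boot all_order all_algebra all_classical all_reals all_analysis
  Rstruct Rstruct_topology.
Import Order.TTheory GRing.Theory Num.Theory numFieldNormedType.Exports.
Local Open Scope classical_set_scope.
Local Open Scope ring_scope.

Lemma linear_form_continuous {n : nat} (a : 'I_n -> R) (s : seq 'I_n) :
  continuous (fun v : 'rV[R]_n => \sum_(i <- s) a i * v ord0 i).
Proof.
elim: s => [|i s IH].
  under eq_fun do rewrite big_nil; exact: cst_continuous.
under eq_fun do rewrite big_cons.
move=> x.
have ai_cont : {for x, continuous (fun v : 'rV[R]_n => a i * v ord0 i)}.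
  apply: (continuousM (s := fun=> a i) (t := fun v : 'rV[R]_n => v ord0 i)).
    exact: cst_continuous.
  exact: coord_continuous.
exact: (@continuousD R R^o _ _ _ x ai_cont (IH x)).
Qed.

Lemma polytope_max {n : nat} {J : Type} (A : J -> 'I_n -> R) (b : J -> R)
    (c : 'I_n -> R) (M : R) :
  let F := [set v : 'rV[R]_n | (forall i, 0 <= v ord0 i) /\
                               (forall j, \sum_i A j i * v ord0 i = b j)] in
  F !=set0 -> (forall v, F v -> forall i, v ord0 i <= M) ->
  exists2 v, F v & forall w, F w -> \sum_i c i * w ord0 i <= \sum_i c i * v ord0 i.
Proof.
move=> F F0 FM.
have Fclosed : closed F.
  have -> : F = (\bigcap_(i in setT) [set v : 'rV[R]_n | 0 <= v ord0 i]) `&`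
      (\bigcap_(j in setT)
         ((fun v : 'rV[R]_n => \sum_i A j i * v ord0 i) @^-1` [set b j])).
    rewrite /F predeqE => v; split.
      by move=> [H1 H2]; split => [i _|j _]; [exact: H1|exact: H2].
    by move=> [H1 H2]; split => [i|j]; [exact: H1|exact: H2].
  apply: closedI; apply: closed_bigI => i _.
    have := @preimage_closed _ R (fun v : 'rV[R]_n => v ord0 i) [set x : R | 0 <= x].
    apply; last exact: closed_ge.
    by move=> x _; exact: coord_continuous.
  have := @preimage_closed _ R (fun v : 'rV[R]_n => \sum_k A i k * v ord0 k) [set b i].
  apply; last exact: closed_eq.
  by move=> x _; exact: (linear_form_continuous (A i) (index_enum _)).
have box_compact :
    compact [set v : 'rV[R]_n | forall i, (fun=> `[0, M]%classic) i (v ord0 i)].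
  exact: (rV_compact (fun=> @segment_compact R 0 M)).
have Fcompact : compact F.
  apply: (subclosed_compact Fclosed box_compact) => v Fv i /=.
  by rewrite in_itv /=; apply/andP; split; [case: Fv => + _; apply | exact: FM].
have [v vF vmax] := EVT_max_rV F0 Fcompact
  (continuous_subspaceT (linear_form_continuous c (index_enum _))).
exists v; first exact: set_mem vF.
by move=> w Fw; apply: vmax; exact: mem_set.
Qed.

Lemma lsum_bigop {T : Type} (d : T) (l : list T) (f : T -> R) :
  lsum l f = \sum_(i < size l) f (seq.nth d l i).
Proof.
rewrite /lsum; elim: l => [|a l IH] /=; first by rewrite big_ord0.
by rewrite big_ord_recl /= IH.
Qed.

Lemma seq_nth_List_nth {T : Type} (d : T) (l : list T) (i : nat) :
  seq.nth d l i = List.nth i l d.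
Proof. by elim: l i => [|a l IH] [|i] //=. Qed.

(* The same statement for functions supported on a duplicate-free list:
   identify such a function with the row vector of its values on the list. *)
Lemma lp_max_list {T J : Type} (d : T) (l : list T) (Hl : NoDup l)
    (A : J -> T -> R) (b : J -> R) (c : T -> R) (M : R) :
  (exists rho, lp_feasible l A b rho) ->
  (forall rho, lp_feasible l A b rho -> forall t, In t l -> Rle (rho t) M) ->
  exists rho, lp_feasible l A b rho /\ forall rho', lp_feasible l A b rho' ->
    Rle (lsum l (fun t => Rmult (c t) (rho' t))) (lsum l (fun t => Rmult (c t) (rho t))).
Proof.
move=> [rho0 rho0_feas] bounded.
set n := size l.
pose vec (rho : T -> R) : 'rV[R]_n := \row_(i < n) rho (seq.nth d l i).
pose fn (v : 'rV[R]_n) (t : T) : R :=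
  \sum_(i < n) (if `[< seq.nth d l i = t >] then v ord0 i else 0).
have nth_in (i : 'I_n) : In (seq.nth d l i) l.
  by rewrite seq_nth_List_nth; apply: nth_In; apply/ssrnat.ltP; exact: ltn_ord.
have fn_nth v (j : 'I_n) : fn v (seq.nth d l j) = v ord0 j.
  rewrite /fn (bigD1 j) //= asboolT // big1 ?addr0 // => i ij.
  case: asboolP => // e; exfalso; move: ij => /eqP; apply; apply: val_inj => /=.
  move: e; rewrite !seq_nth_List_nth => e.
  by apply: (proj1 (NoDup_nth l d) Hl) e; apply/ssrnat.ltP; exact: ltn_ord.
have fn_out v t : ~ In t l -> fn v t = 0.
  move=> Ht; rewrite /fn big1 // => i _; case: asboolP => // e.
  by exfalso; apply: Ht; rewrite -e.
have in_nth t : In t l -> exists j : 'I_n, t = seq.nth d l j.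
  move=> /(In_nth l t d) [k [/ssrnat.ltP Hk Hkt]].
  by exists (Ordinal Hk); rewrite seq_nth_List_nth.
have lsum_fn (g : T -> R) v :
    lsum l (fun t => g t * fn v t) = \sum_(i < n) g (seq.nth d l i) * v ord0 i.
  by rewrite (lsum_bigop d); apply: eq_bigr => i _; rewrite fn_nth.
have lsum_vec (g : T -> R) rho :
    lsum l (fun t => g t * rho t) = \sum_(i < n) g (seq.nth d l i) * vec rho ord0 i.
  by rewrite (lsum_bigop d); apply: eq_bigr => i _; rewrite mxE.
pose F := [set v : 'rV[R]_n | (forall i, 0 <= v ord0 i) /\
  (forall j, \sum_(i < n) A j (seq.nth d l i) * v ord0 i = b j)].
have vec_feas rho : lp_feasible l A b rho -> F (vec rho).
  move=> [rho_ge0 [_ rho_eq]]; split => [i|j].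
    by rewrite mxE; apply/RleP; exact: rho_ge0.
  by rewrite -rho_eq lsum_vec.
have fn_feas w : F w -> lp_feasible l A b (fn w).
  move=> [w_ge0 w_eq]; split; [|split].
  - by move=> t /in_nth [j ->]; rewrite fn_nth; apply/RleP; exact: w_ge0.
  - exact: fn_out.
  - by move=> j; rewrite lsum_fn; exact: w_eq.
have F_bounded w : F w -> forall i, w ord0 i <= M.
  move=> Fw i; have := bounded _ (fn_feas w Fw) _ (nth_in i).
  by rewrite fn_nth => /RleP.
have [v vF vmax] := polytope_max (fun j i => A j (seq.nth d l i)) b
  (fun i => c (seq.nth d l i)) M (ex_intro _ (vec rho0) (vec_feas rho0 rho0_feas))
  F_bounded.
exists (fn v); split; first exact: fn_feas.
move=> rho' rho'_feas; apply/RleP; rewrite lsum_fn lsum_vec.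
exact: vmax (vec_feas _ rho'_feas).
Qed.

End LinearProgram.

Import ListNotations.
Open Scope R_scope.

Definition eqd {A : Type} (x y : A) : {x = y} + {x <> y} :=
  excluded_middle_informative (x = y).
Definition kron {A : Type} (x y : A) : R := if eqd x y then 1 else 0.

Lemma kron_ge0 {A} (a b : A) : 0 <= kron a b.
Proof. unfold kron; destruct (eqd a b); lra. Qed.
Lemma kron_eq {A} (a : A) : kron a a = 1.
Proof. unfold kron; destruct (eqd a a); congruence. Qed.
Lemma kron_neq {A} (a b : A) : a <> b -> kron a b = 0.
Proof. unfold kron; destruct (eqd a b); congruence. Qed.

Lemma lsum_nil {T} (f : T -> R) : lsum [] f = 0.
Proof. reflexivity. Qed.
Lemma lsum_cons {T} a l (f : T -> R) : lsum (a :: l) f = f a + lsum l f.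
Proof. reflexivity. Qed.

Lemma lsum_app {T} l1 l2 (f : T -> R) : lsum (l1 ++ l2) f = lsum l1 f + lsum l2 f.
Proof.
  induction l1 as [|a l1 IH]; simpl app; [rewrite lsum_nil; ring|].
  rewrite !lsum_cons, IH; ring.
Qed.

Lemma lsum_ext {T} l (f g : T -> R) :
  (forall t, In t l -> f t = g t) -> lsum l f = lsum l g.
Proof.
  induction l as [|a l IH]; intros H; [reflexivity|].
  rewrite !lsum_cons, H by (simpl; auto). f_equal. apply IH; intros; apply H; simpl; auto.
Qed.

Lemma lsum_plus {T} l (f g : T -> R) :
  lsum l (fun t => f t + g t) = lsum l f + lsum l g.
Proof. induction l as [|a l IH]; [rewrite !lsum_nil; ring|rewrite !lsum_cons, IH; ring]. Qed.

Lemma lsum_scal {T} l c (f : T -> R) : lsum l (fun t => c * f t) = c * lsum l f.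
Proof. induction l as [|a l IH]; [rewrite !lsum_nil; ring|rewrite !lsum_cons, IH; ring]. Qed.

Lemma lsum_le {T} l (f g : T -> R) :
  (forall t, In t l -> f t <= g t) -> lsum l f <= lsum l g.
Proof.
  induction l as [|a l IH]; intros H; [rewrite !lsum_nil; lra|].
  rewrite !lsum_cons.
  assert (f a <= g a) by (apply H; simpl; auto).
  assert (lsum l f <= lsum l g) by (apply IH; intros; apply H; simpl; auto).
  lra.
Qed.

Lemma lsum_zero {T} l (f : T -> R) : (forall t, In t l -> f t = 0) -> lsum l f = 0.
Proof.
  induction l as [|a l IH]; intros H; [reflexivity|].
  rewrite lsum_cons, H, IH; [ring| |simpl; auto]. intros; apply H; simpl; auto.
Qed.

Lemma lsum_nonneg {T} l (f : T -> R) : (forall t, In t l -> 0 <= f t) -> 0 <= lsum l f.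
Proof.
  intros H. rewrite <- (lsum_zero l (fun _ => 0)) by auto. apply lsum_le; auto.
Qed.

Lemma lsum_term_le {T} (l : list T) (f : T -> R) a :
  (forall t, In t l -> 0 <= f t) -> In a l -> f a <= lsum l f.
Proof.
  induction l as [|b l IH]; intros H Ha; [destruct Ha|]. rewrite lsum_cons.
  assert (0 <= f b) by (apply H; simpl; auto).
  assert (0 <= lsum l f) by (apply lsum_nonneg; intros; apply H; simpl; auto).
  destruct Ha as [<-|Ha]; [lra|].
  assert (f a <= lsum l f) by (apply IH; auto; intros; apply H; simpl; auto). lra.
Qed.

Lemma lsum_nonneg_eq0 {T} l (f : T -> R) :
  (forall t, In t l -> 0 <= f t) -> lsum l f = 0 -> forall t, In t l -> f t = 0.
Proof.
  intros H0 H t Ht. apply Rle_antisym; [|apply H0; auto].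
  rewrite <- H. apply lsum_term_le; auto.
Qed.

Lemma lsum_perm {T} l1 l2 (f : T -> R) : Permutation l1 l2 -> lsum l1 f = lsum l2 f.
Proof.
  induction 1; try reflexivity; [rewrite !lsum_cons, IHPermutation; reflexivity| |congruence].
  rewrite !lsum_cons; ring.
Qed.

Lemma lsum_swap {A B} (l1 : list A) (l2 : list B) (f : A -> B -> R) :
  lsum l1 (fun x => lsum l2 (fun y => f x y)) = lsum l2 (fun y => lsum l1 (fun x => f x y)).
Proof.
  induction l1 as [|a l1 IH].
  - symmetry; apply lsum_zero; auto.
  - rewrite lsum_cons, IH, <- lsum_plus. apply lsum_ext; reflexivity.
Qed.

Lemma lsum_prod {A B} (l1 : list A) (l2 : list B) (f : A * B -> R) :
  lsum (list_prod l1 l2) f = lsum l1 (fun x => lsum l2 (fun y => f (x, y))).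
Proof.
  induction l1 as [|a l1 IH]; [reflexivity|].
  simpl list_prod. rewrite lsum_app, IH, lsum_cons. f_equal.
  clear. induction l2; [reflexivity|]. simpl map. rewrite !lsum_cons, IHl2. reflexivity.
Qed.

Lemma lsum_kron {T} l (a : T) (f : T -> R) :
  NoDup l -> In a l -> lsum l (fun t => kron t a * f t) = f a.
Proof.
  induction 1 as [|x l Hx Hl IH]; intros Ha; [destruct Ha|]. rewrite lsum_cons.
  destruct Ha as [<-|Ha].
  - rewrite kron_eq, lsum_zero; [ring|].
    intros t Ht. rewrite kron_neq; [ring|]. intros ->; contradiction.
  - rewrite IH, kron_neq by (auto; intros ->; contradiction). ring.
Qed.

Lemma NoDup_list_prod {A B} (l1 : list A) (l2 : list B) :
  NoDup l1 -> NoDup l2 -> NoDup (list_prod l1 l2).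
Proof.
  induction 1 as [|a l1 Ha Hl1 IH]; intros H2; [constructor|]. simpl. apply NoDup_app; auto.
  - apply FinFun.Injective_map_NoDup; auto. intros b b' E; inversion E; auto.
  - intros [x y] Hx Hy. apply in_map_iff in Hx. destruct Hx as [b [E _]]. inversion E; subst.
    apply in_prod_iff in Hy. tauto.
Qed.

Definition nonzero {T} (F : T -> R) (t : T) : bool :=
  if Req_EM_T (F t) 0 then false else true.

Lemma lsum_filter_nonzero {T} l (F : T -> R) : lsum l F = lsum (filter (nonzero F) l) F.
Proof.
  induction l as [|a l IH]; [reflexivity|]. simpl filter. unfold nonzero at 1.
  destruct (Req_EM_T (F a) 0) as [E|E]; rewrite lsum_cons, IH; [rewrite E; ring|reflexivity].
Qed.

Lemma lsum_cover {T} (l1 l2 : list T) (F : T -> R) : NoDup l1 -> NoDup l2 ->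
  (forall t, F t <> 0 -> In t l1) -> (forall t, F t <> 0 -> In t l2) -> lsum l1 F = lsum l2 F.
Proof.
  intros N1 N2 H1 H2. rewrite (lsum_filter_nonzero l1), (lsum_filter_nonzero l2).
  apply lsum_perm, NoDup_Permutation; try apply NoDup_filter; auto.
  intros t. rewrite !filter_In. unfold nonzero.
  destruct (Req_EM_T (F t) 0); split; intros [_ Ht];
    solve [discriminate | split; auto].
Qed.

Lemma finsum_lsum {T} (l : list T) (F : T -> R) :
  NoDup l -> (forall t, F t <> 0 -> In t l) -> finsum F = lsum l F.
Proof.
  intros N H. unfold finsum.
  assert (Hex : exists s, is_finsum F s) by (exists (lsum l F); exists l; auto).
  destruct (epsilon_spec (inhabits 0) (is_finsum F) Hex) as [l' [N' [H' E]]].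
  rewrite E. apply lsum_cover; auto.
Qed.

Lemma finsum_nonneg_eq0 {T} (g : T -> R) :
  (forall t, 0 <= g t) -> has_fin_supp g -> finsum g = 0 -> forall t, g t = 0.
Proof.
  intros Hn [l Hl] Hs t. set (l' := nodup eqd l).
  assert (Hl' : forall t, g t <> 0 -> In t l') by (intros; apply nodup_In; auto).
  rewrite (finsum_lsum l') in Hs by (auto; apply NoDup_nodup).
  destruct (Req_EM_T (g t) 0) as [|Ht]; auto.
  apply (lsum_nonneg_eq0 l' g); auto.
Qed.

Section Graph.
Variable V : Type.
Variable q : V -> V -> R.
Hypothesis Hg : is_graph q.
Hypothesis Hrev : reversible q.
Hypothesis Hconn : connected q.

Lemma q_ge0 x y : 0 <= q x y.
Proof. apply Hg. Qed.

Lemma adj_sym x y : 0 < q x y -> 0 < q y x.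
Proof.
  intros Hxy. destruct Hrev as [m [Hm Hq]]. specialize (Hq x y).
  destruct (Rle_lt_or_eq_dec 0 (q y x) (q_ge0 y x)) as [|E]; auto.
  rewrite <- E in Hq. assert (0 < q x y * m x) by (apply Rmult_lt_0_compat; auto). lra.
Qed.

Lemma walk_snoc x y z n : walk q x y n -> 0 < q y z -> walk q x z (S n).
Proof. induction 1; intros; econstructor; eauto; constructor. Qed.

Lemma walk_rev x y n : walk q x y n -> walk q y x n.
Proof. induction 1; [constructor|]. eapply walk_snoc; eauto. apply adj_sym; auto. Qed.

Lemma walk_app x y z n m : walk q x y n -> walk q y z m -> walk q x z (n + m).
Proof. induction 1; intros; simpl; auto. econstructor; eauto. Qed.

(* Connectedness provides a walk of minimal length, so [dist] is specified. *)
Lemma min_walk x y : exists k, walk q x y k /\ forall m, walk q x y m -> (k <= m)%nat.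
Proof.
  destruct (Hconn x y) as [n Hn]. revert Hn.
  induction n as [n IH] using lt_wf_ind. intros Hn.
  destruct (classic (exists m, (m < n)%nat /\ walk q x y m)) as [[m [Hm Hw]]|Hno].
  - apply (IH m Hm Hw).
  - exists n; split; auto. intros m Hm.
    destruct (Nat.lt_ge_cases m n); auto. exfalso; apply Hno; eauto.
Qed.

Lemma dist_spec x y :
  walk q x y (dist q x y) /\ forall m, walk q x y m -> (dist q x y <= m)%nat.
Proof.
  apply (epsilon_spec (inhabits 0%nat)
    (fun n => walk q x y n /\ forall m, walk q x y m -> (n <= m)%nat)), min_walk.
Qed.

Lemma dist_le x y m : walk q x y m -> (dist q x y <= m)%nat.
Proof. apply dist_spec. Qed.

Lemma dist_tri x y z : (dist q x z <= dist q x y + dist q y z)%nat.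
Proof. apply dist_le, walk_app with y; apply dist_spec. Qed.

Lemma dist_sym x y : dist q x y = dist q y x.
Proof. apply Nat.le_antisymm; apply dist_le, walk_rev, dist_spec. Qed.

Lemma dist_adj x y : 0 < q x y -> (dist q x y <= 1)%nat.
Proof. intros; apply dist_le. econstructor; eauto; constructor. Qed.

Lemma dist_refl x : dist q x x = 0%nat.
Proof. apply Nat.le_0_r, dist_le. constructor. Qed.

Definition geodesic_step (x y z : V) : Prop :=
  (x = y /\ z = x) \/ (x <> y /\ 0 < q x z /\ S (dist q z y) = dist q x y).

Lemma geodesic_step_exists x y : exists z, geodesic_step x y z.
Proof.
  destruct (eqd x y) as [E|Hxy]; [exists x; left; auto|].
  destruct (dist_spec x y) as [W _].
  inversion W as [x' Hx Hn | x' w z n Hq W' Hx Hz Hn]; [congruence|subst].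
  exists w. right. repeat split; auto.
  assert (dist q w y <= n)%nat by (apply dist_le; auto).
  pose proof (dist_tri x w y). pose proof (dist_adj x w Hq). lia.
Qed.

Lemma qmin_le x y : 0 < q x y -> qmin q <= q x y.
Proof.
  intros Hxy. unfold qmin.
  set (E := fun r => exists x y, 0 < q x y /\ r = q x y).
  assert (Hex : exists m, is_glb E m).
  { destruct (completeness (fun r => E (- r))) as [m [Hub Hlub]].
    - exists 0. intros r [a [b [Hab Hr]]]. lra.
    - exists (- q x y). exists x, y. split; auto; ring.
    - exists (- m). split.
      + intros s Hs. assert (- s <= m) by (apply Hub; rewrite Ropp_involutive; auto). lra.
      + intros b Hb. assert (m <= - b) by (apply Hlub; intros r Hr; specialize (Hb _ Hr); lra).
        lra. }
  apply (epsilon_spec (inhabits 0) (is_glb E) Hex). exists x, y; auto.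
Qed.

Definition row_cover (x : V) : list V :=
  proj1_sig (constructive_indefinite_description _ (proj2 Hg x)).

Definition nbhd (x : V) : list V :=
  filter (fun y => if eqd y x then true else nonzero (q x) y) (nodup eqd (x :: row_cover x)).

Lemma nbhd_NoDup x : NoDup (nbhd x).
Proof. apply NoDup_filter, NoDup_nodup. Qed.

Lemma nbhd_self x : In x (nbhd x).
Proof.
  apply filter_In. split; [apply nodup_In; simpl; auto|]. destruct (eqd x x); congruence.
Qed.

Lemma nbhd_supp x y : q x y <> 0 -> In y (nbhd x).
Proof.
  intros H. apply filter_In. split.
  - apply nodup_In; right. unfold row_cover.
    destruct (constructive_indefinite_description _ _) as [l Hl]; simpl; auto.
  - unfold nonzero. destruct (eqd y x); auto. destruct (Req_EM_T (q x y) 0); congruence.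
Qed.

Lemma nbhd_adj x y : In y (nbhd x) -> y = x \/ 0 < q x y.
Proof.
  intros H. apply filter_In in H. destruct H as [_ H]. unfold nonzero in H.
  destruct (eqd y x); auto. destruct (Req_EM_T (q x y) 0); [discriminate|].
  right. destruct (q_ge0 x y); auto; congruence.
Qed.

Lemma q_out_nbhd x y : ~ In y (nbhd x) -> q x y = 0.
Proof. intros H. destruct (Req_EM_T (q x y) 0); auto. exfalso; apply H, nbhd_supp; auto. Qed.

Lemma dist_nbhd x y : In y (nbhd x) -> (dist q x y <= 1)%nat /\ (dist q y x <= 1)%nat.
Proof.
  intros H. rewrite (dist_sym y x).
  destruct (nbhd_adj x y H) as [->|Hq]; [rewrite dist_refl; lia|].
  pose proof (dist_adj x y Hq); lia.
Qed.

Lemma laplacian_lsum f x : laplacian q f x = lsum (nbhd x) (fun y => q x y * (f y - f x)).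
Proof.
  apply finsum_lsum; [apply nbhd_NoDup|]. intros y H. apply nbhd_supp.
  intros E; apply H; rewrite E; ring.
Qed.

Section Pair.
Variables x0 y0 : V.

Definition Supp : list (V * V) := list_prod (nbhd x0) (nbhd y0).

Lemma Supp_NoDup : NoDup Supp.
Proof. apply NoDup_list_prod; apply nbhd_NoDup. Qed.

Lemma in_Supp a b : In (a, b) Supp <-> In a (nbhd x0) /\ In b (nbhd y0).
Proof. apply in_prod_iff. Qed.

Lemma anchor_in_Supp : In (x0, y0) Supp.
Proof. apply in_Supp; split; apply nbhd_self. Qed.

Lemma Supp_left a b : In (a, b) Supp -> In (a, y0) Supp.
Proof. rewrite !in_Supp. intros [Ha _]. split; [auto|apply nbhd_self]. Qed.

Lemma Supp_right a b : In (a, b) Supp -> In (x0, b) Supp.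
Proof. rewrite !in_Supp. intros [_ Hb]. split; [apply nbhd_self|auto]. Qed.

Lemma lsum_row x (s : V * V -> R) : In x (nbhd x0) ->
  lsum Supp (fun z => kron (fst z) x * s z) = lsum (nbhd y0) (fun b => s (x, b)).
Proof.
  intros H. unfold Supp. rewrite lsum_prod. simpl.
  rewrite (lsum_ext _ _ (fun a => kron a x * lsum (nbhd y0) (fun b => s (a, b))))
    by (intros; apply lsum_scal).
  apply (lsum_kron (nbhd x0) x (fun a => lsum (nbhd y0) (fun b => s (a, b))));
    auto using nbhd_NoDup.
Qed.

Lemma lsum_row_out x (s : V * V -> R) : ~ In x (nbhd x0) ->
  lsum Supp (fun z => kron (fst z) x * s z) = 0.
Proof.
  intros H. apply lsum_zero. intros [a b] Hz. apply in_Supp in Hz. simpl.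
  rewrite kron_neq; [ring|]. intros ->; tauto.
Qed.

Lemma lsum_col y (s : V * V -> R) : In y (nbhd y0) ->
  lsum Supp (fun z => kron (snd z) y * s z) = lsum (nbhd x0) (fun a => s (a, y)).
Proof.
  intros H. unfold Supp. rewrite lsum_prod. simpl. apply lsum_ext. intros a _.
  apply (lsum_kron (nbhd y0) y (fun b => s (a, b))); auto using nbhd_NoDup.
Qed.

Lemma lsum_col_out y (s : V * V -> R) : ~ In y (nbhd y0) ->
  lsum Supp (fun z => kron (snd z) y * s z) = 0.
Proof.
  intros H. apply lsum_zero. intros [a b] Hz. apply in_Supp in Hz. simpl.
  rewrite kron_neq; [ring|]. intros ->; tauto.
Qed.

Lemma Supp_first_moment (s : V * V -> R) (g : V -> R) : g x0 = 0 ->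
  (forall x, x <> x0 -> lsum Supp (fun z => kron (fst z) x * s z) = q x0 x) ->
  lsum Supp (fun z => g (fst z) * s z) = lsum (nbhd x0) (fun a => q x0 a * g a).
Proof.
  intros Hg0 Hrow. unfold Supp at 1. rewrite lsum_prod. simpl. apply lsum_ext. intros a Ha.
  rewrite (lsum_scal (nbhd y0) (g a) (fun b => s (a, b))).
  destruct (eqd a x0) as [->|Na]; [rewrite Hg0; ring|].
  rewrite <- (lsum_row a s Ha), (Hrow a Na). ring.
Qed.

Lemma Supp_second_moment (s : V * V -> R) (g : V -> R) : g y0 = 0 ->
  (forall y, y <> y0 -> lsum Supp (fun z => kron (snd z) y * s z) = q y0 y) ->
  lsum Supp (fun z => g (snd z) * s z) = lsum (nbhd y0) (fun b => q y0 b * g b).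
Proof.
  intros Hg0 Hcol. unfold Supp at 1. rewrite lsum_prod, lsum_swap. simpl.
  apply lsum_ext. intros b Hb.
  rewrite (lsum_scal (nbhd x0) (g b) (fun a => s (a, b))).
  destruct (eqd b y0) as [->|Nb]; [rewrite Hg0; ring|].
  rewrite <- (lsum_col b s Hb), (Hcol b Nb). ring.
Qed.

Definition gain (z : V * V) : R := INR (dist q x0 y0) - INR (dist q (fst z) (snd z)).
Definition shift (z : V * V) : Z :=
  (Z.of_nat (dist q (fst z) (snd z)) - Z.of_nat (dist q x0 y0))%Z.

(* Moving only one endpoint by one step changes the distance by at most one. *)
Lemma shift_one_step z : In z Supp -> fst z = x0 \/ snd z = y0 -> (Z.abs (shift z) <= 1)%Z.
Proof.
  destruct z as [a b]. intros H; apply in_Supp in H. destruct H as [Ha Hb].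
  destruct (dist_nbhd _ _ Ha), (dist_nbhd _ _ Hb). unfold shift; simpl.
  intros [-> | ->].
  - pose proof (dist_tri x0 y0 b). pose proof (dist_tri x0 b y0). lia.
  - pose proof (dist_tri a x0 y0). pose proof (dist_tri x0 a y0). lia.
Qed.

Inductive constraint : Type := Anchor | Row (x : V) | Col (y : V).

Definition coef (c : constraint) (t : V * V) : R :=
  match c with
  | Anchor => kron t (x0, y0)
  | Row x => if eqd x x0 then 0 else kron (fst t) x
  | Col y => if eqd y y0 then 0 else kron (snd t) y
  end.

Definition rhs (c : constraint) : R :=
  match c with
  | Anchor => 0
  | Row x => if eqd x x0 then 0 else q x0 x
  | Col y => if eqd y y0 then 0 else q y0 y
  end.

Definition local_plan (rho : V * V -> R) : Prop := lp_feasible Supp coef rhs rho.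

Definition local_cost (rho : V * V -> R) : R := lsum Supp (fun z => gain z * rho z).

Lemma local_ge0 rho t : local_plan rho -> In t Supp -> 0 <= rho t.
Proof. intros [H _]. apply H. Qed.

Lemma local_row rho x : local_plan rho -> x <> x0 ->
  lsum Supp (fun t => kron (fst t) x * rho t) = q x0 x.
Proof.
  intros [_ [_ H]] Hx. specialize (H (Row x)). simpl in H. destruct (eqd x x0); [congruence|auto].
Qed.

Lemma local_col rho y : local_plan rho -> y <> y0 ->
  lsum Supp (fun t => kron (snd t) y * rho t) = q y0 y.
Proof.
  intros [_ [_ H]] Hy. specialize (H (Col y)). simpl in H. destruct (eqd y y0); [congruence|auto].
Qed.

(* Local plans are bounded entrywise by the total rate out of x0 and y0:
   an entry off the anchor lies in a constrained row or column. *)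
Definition total_rate : R := lsum (nbhd x0) (q x0) + lsum (nbhd y0) (q y0).

Lemma entry_le_row rho a b :
  local_plan rho -> In (a, b) Supp -> a <> x0 -> rho (a, b) <= q x0 a.
Proof.
  intros F Hab Ha. rewrite <- (local_row rho a F Ha).
  replace (rho (a, b)) with (kron (fst (a, b)) a * rho (a, b)) by (simpl; rewrite kron_eq; ring).
  apply (lsum_term_le Supp (fun t => kron (fst t) a * rho t) (a, b)); auto.
  intros t Ht. apply Rmult_le_pos; [apply kron_ge0|apply (local_ge0 rho t F Ht)].
Qed.

Lemma entry_le_col rho a b :
  local_plan rho -> In (a, b) Supp -> b <> y0 -> rho (a, b) <= q y0 b.
Proof.
  intros F Hab Hb. rewrite <- (local_col rho b F Hb).
  replace (rho (a, b)) with (kron (snd (a, b)) b * rho (a, b)) by (simpl; rewrite kron_eq; ring).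
  apply (lsum_term_le Supp (fun t => kron (snd t) b * rho t) (a, b)); auto.
  intros t Ht. apply Rmult_le_pos; [apply kron_ge0|apply (local_ge0 rho t F Ht)].
Qed.

Lemma local_bounded rho t : local_plan rho -> In t Supp -> rho t <= total_rate.
Proof.
  intros F Ht. destruct t as [a b]. pose proof Ht as Hab. apply in_Supp in Hab.
  destruct Hab as [Ha Hb].
  assert (q x0 a <= lsum (nbhd x0) (q x0)) by (apply lsum_term_le; auto using q_ge0).
  assert (q y0 b <= lsum (nbhd y0) (q y0)) by (apply lsum_term_le; auto using q_ge0).
  assert (0 <= lsum (nbhd x0) (q x0)) by (apply lsum_nonneg; auto using q_ge0).
  assert (0 <= lsum (nbhd y0) (q y0)) by (apply lsum_nonneg; auto using q_ge0).
  unfold total_rate. destruct (eqd a x0) as [->|Na].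
  - destruct (eqd b y0) as [->|Nb].
    + destruct F as [_ [_ F]]. specialize (F Anchor). simpl in F.
      rewrite (lsum_kron Supp (x0, y0) rho Supp_NoDup anchor_in_Supp) in F. lra.
    + pose proof (entry_le_col rho x0 b F Ht Nb). lra.
  - pose proof (entry_le_row rho a b F Ht Na). lra.
Qed.

(* A local plan exists: move the first coordinate, or the second one, but not both. *)
Definition stepwise_plan (z : V * V) : R :=
  if excluded_middle_informative (In z Supp) then
    kron (snd z) y0 * (if eqd (fst z) x0 then 0 else q x0 (fst z)) +
    kron (fst z) x0 * (if eqd (snd z) y0 then 0 else q y0 (snd z))
  else 0.

Lemma stepwise_plan_local : local_plan stepwise_plan.
Proof.
  split; [|split].
  - intros t Ht. unfold stepwise_plan.
    destruct (excluded_middle_informative (In t Supp)); [|contradiction].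
    destruct (eqd (fst t) x0), (eqd (snd t) y0);
      repeat apply Rplus_le_le_0_compat; repeat apply Rmult_le_pos;
      try apply kron_ge0; try apply q_ge0; lra.
  - intros t Ht. unfold stepwise_plan.
    destruct (excluded_middle_informative (In t Supp)); [contradiction|reflexivity].
  - intros [|x|y]; simpl.
    + rewrite (lsum_kron Supp (x0, y0) _ Supp_NoDup anchor_in_Supp). unfold stepwise_plan.
      destruct (excluded_middle_informative (In (x0, y0) Supp)); [|reflexivity]. simpl.
      destruct (eqd x0 x0), (eqd y0 y0); try congruence. ring.
    + destruct (eqd x x0) as [|Nx]; [apply lsum_zero; intros; ring|].
      destruct (classic (In x (nbhd x0))) as [Hx|Hx]; [|rewrite lsum_row_out, q_out_nbhd; auto].
      rewrite lsum_row by auto.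
      rewrite (lsum_ext _ _ (fun b => kron b y0 * q x0 x)).
      * apply (lsum_kron (nbhd y0) y0 (fun _ => q x0 x)); auto using nbhd_NoDup, nbhd_self.
      * intros b Hb. unfold stepwise_plan.
        destruct (excluded_middle_informative (In (x, b) Supp)) as [_|N];
          [|exfalso; apply N, in_Supp; auto].
        simpl. destruct (eqd x x0); [congruence|]. rewrite (kron_neq x x0) by auto. ring.
    + destruct (eqd y y0) as [|Ny]; [apply lsum_zero; intros; ring|].
      destruct (classic (In y (nbhd y0))) as [Hy|Hy]; [|rewrite lsum_col_out, q_out_nbhd; auto].
      rewrite lsum_col by auto.
      rewrite (lsum_ext _ _ (fun a => kron a x0 * q y0 y)).
      * apply (lsum_kron (nbhd x0) x0 (fun _ => q y0 y)); auto using nbhd_NoDup, nbhd_self.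
      * intros a Ha. unfold stepwise_plan.
        destruct (excluded_middle_informative (In (a, y) Supp)) as [_|N];
          [|exfalso; apply N, in_Supp; auto].
        simpl. destruct (eqd y y0); [congruence|]. rewrite (kron_neq y y0) by auto. ring.
Qed.

Lemma local_optimum_exists : exists rho, local_plan rho /\
  forall rho', local_plan rho' -> local_cost rho' <= local_cost rho.
Proof.
  apply (LinearProgram.lp_max_list (x0, y0) Supp Supp_NoDup coef rhs gain total_rate).
  - exists stepwise_plan; apply stepwise_plan_local.
  - intros rho F t Ht; apply local_bounded; auto.
Qed.

Lemma plan_supported rho :
  transport_plan q x0 y0 rho -> forall a b, rho a b <> 0 -> In (a, b) Supp.
Proof.
  intros [Hge0 [[l Hl] [Hrow Hcol]]] a b Hab. apply in_Supp. split.
  - destruct (classic (In a (nbhd x0))) as [|H]; auto. exfalso.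
    assert (Ha : a <> x0) by (intros ->; apply H, nbhd_self).
    apply Hab, (finsum_nonneg_eq0 (fun y => rho a y)); auto.
    + exists (map snd l). intros y Hy. apply (in_map snd l (a, y)), (Hl (a, y)). auto.
    + rewrite Hrow by auto. apply q_out_nbhd; auto.
  - destruct (classic (In b (nbhd y0))) as [|H]; auto. exfalso.
    assert (Hb : b <> y0) by (intros ->; apply H, nbhd_self).
    apply Hab, (finsum_nonneg_eq0 (fun x => rho x b)); auto.
    + exists (map fst l). intros x Hx. apply (in_map fst l (x, b)), (Hl (x, b)). auto.
    + rewrite Hcol by auto. apply q_out_nbhd; auto.
Qed.

(* A transport plan, with its (costless) anchor entry erased, is a local plan of
   the same cost. *)
Definition erase_anchor (rho : V -> V -> R) (z : V * V) : R :=
  if eqd z (x0, y0) then 0 else rho (fst z) (snd z).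

Lemma plan_local rho : transport_plan q x0 y0 rho ->
  local_plan (erase_anchor rho) /\ cost q x0 y0 rho = local_cost (erase_anchor rho).
Proof.
  intros TP. pose proof (plan_supported rho TP) as Hs. destruct TP as [Hge0 [_ [Hrow Hcol]]].
  assert (Erow : forall a b, a <> x0 -> erase_anchor rho (a, b) = rho a b).
  { intros a b Ha. unfold erase_anchor.
    destruct (eqd (a, b) (x0, y0)) as [E|]; [inversion E; congruence|auto]. }
  assert (Ecol : forall a b, b <> y0 -> erase_anchor rho (a, b) = rho a b).
  { intros a b Hb. unfold erase_anchor.
    destruct (eqd (a, b) (x0, y0)) as [E|]; [inversion E; congruence|auto]. }
  split; [split; [|split]|].
  - intros t _. unfold erase_anchor. destruct (eqd t (x0, y0)); [lra|apply Hge0].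
  - intros [a b] Ht. unfold erase_anchor. destruct (eqd (a, b) (x0, y0)); auto. simpl.
    destruct (Req_EM_T (rho a b) 0); auto. exfalso; apply Ht, Hs; auto.
  - intros [|x|y]; simpl.
    + rewrite (lsum_kron Supp (x0, y0) _ Supp_NoDup anchor_in_Supp). unfold erase_anchor.
      destruct (eqd (x0, y0) (x0, y0)); congruence.
    + destruct (eqd x x0) as [|Nx]; [apply lsum_zero; intros; ring|].
      destruct (classic (In x (nbhd x0))) as [Hx|Hx]; [|rewrite lsum_row_out, q_out_nbhd; auto].
      rewrite lsum_row, <- (Hrow x Nx) by auto.
      rewrite (finsum_lsum (nbhd y0)); [apply lsum_ext; auto|apply nbhd_NoDup|].
      intros b H. apply (Hs x b) in H. apply in_Supp in H; tauto.
    + destruct (eqd y y0) as [|Ny]; [apply lsum_zero; intros; ring|].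
      destruct (classic (In y (nbhd y0))) as [Hy|Hy]; [|rewrite lsum_col_out, q_out_nbhd; auto].
      rewrite lsum_col, <- (Hcol y Ny) by auto.
      rewrite (finsum_lsum (nbhd x0)); [apply lsum_ext; auto|apply nbhd_NoDup|].
      intros a H. apply (Hs a y) in H. apply in_Supp in H; tauto.
  - unfold cost, local_cost. rewrite (finsum_lsum Supp); [|apply Supp_NoDup|].
    + apply lsum_ext. intros [a b] _. unfold erase_anchor, gain. simpl.
      destruct (eqd (a, b) (x0, y0)) as [E|]; [inversion E; subst; lra|ring].
    + intros [a b] Hz. apply Hs. simpl in Hz. intros E; apply Hz; rewrite E; ring.
Qed.

Section Reroute.
Variables y1 x1 : V.
Hypothesis Hy1 : geodesic_step x0 y0 y1.
Hypothesis Hx1 : geodesic_step y0 x0 x1.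
Variable rho : V * V -> R.
Hypothesis Hrho : local_plan rho.
Hypothesis Hopt : forall rho', local_plan rho' -> local_cost rho' <= local_cost rho.

Definition keep (p : V * V) : Prop :=
  fst p = x0 \/ snd p = y0 \/ ((Z.abs (shift p) <= 1)%Z /\ fst p <> y1 /\ snd p <> x1).

Definition transfer (p z : V * V) : R :=
  if excluded_middle_informative (keep p) then kron z p * rho p
  else rho p * (kron z (fst p, y0) + kron z (x0, snd p)).

Definition rerouted (z : V * V) : R := lsum Supp (fun p => transfer p z).

Definition rerouted_weight (w : V * V -> R) (p : V * V) : R :=
  if excluded_middle_informative (keep p) then w p * rho p
  else rho p * (w (fst p, y0) + w (x0, snd p)).

Lemma lsum_rerouted (w : V * V -> R) :
  lsum Supp (fun z => w z * rerouted z) = lsum Supp (rerouted_weight w).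
Proof.
  unfold rerouted.
  rewrite (lsum_ext Supp _ (fun z => lsum Supp (fun p => w z * transfer p z)))
    by (intros; symmetry; apply lsum_scal).
  rewrite lsum_swap. apply lsum_ext. intros p Hp. unfold transfer, rerouted_weight.
  destruct (excluded_middle_informative (keep p)).
  - rewrite (lsum_ext _ _ (fun z => kron z p * (w z * rho p))) by (intros; ring).
    apply (lsum_kron Supp p (fun z => w z * rho p) Supp_NoDup Hp).
  - destruct p as [a b]. simpl.
    rewrite (lsum_ext _ _ (fun z => kron z (a, y0) * (rho (a, b) * w z) +
                                    kron z (x0, b) * (rho (a, b) * w z))) by (intros; ring).
    rewrite lsum_plus,
      (lsum_kron Supp (a, y0) (fun z => rho (a, b) * w z) Supp_NoDup (Supp_left a b Hp)),
      (lsum_kron Supp (x0, b) (fun z => rho (a, b) * w z) Supp_NoDup (Supp_right a b Hp)).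
    ring.
Qed.

Lemma rerouted_ge0 z : 0 <= rerouted z.
Proof.
  apply lsum_nonneg. intros p Hp. pose proof (local_ge0 rho p Hrho Hp). unfold transfer.
  destruct (excluded_middle_informative (keep p)).
  - apply Rmult_le_pos; [apply kron_ge0|auto].
  - apply Rmult_le_pos; auto. apply Rplus_le_le_0_compat; apply kron_ge0.
Qed.

Lemma rerouted_supp z : rerouted z <> 0 -> In z Supp.
Proof.
  intros H. destruct (classic (In z Supp)) as [|N]; auto. exfalso; apply H.
  apply lsum_zero. intros [a b] Hp. unfold transfer.
  destruct (excluded_middle_informative (keep (a, b))).
  - rewrite kron_neq; [ring|]. intros ->; contradiction.
  - simpl. rewrite (kron_neq z (a, y0)), (kron_neq z (x0, b)); [ring| |].
    + intros ->; apply N; eapply Supp_right; eauto.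
    + intros ->; apply N; eapply Supp_left; eauto.
Qed.

Lemma rerouted_row x : x <> x0 -> lsum Supp (fun z => kron (fst z) x * rerouted z) = q x0 x.
Proof.
  intros Hx. rewrite lsum_rerouted, <- (local_row rho x Hrho Hx). apply lsum_ext.
  intros [a b] _. unfold rerouted_weight. simpl.
  destruct (excluded_middle_informative (keep (a, b))); [reflexivity|].
  rewrite (kron_neq x0 x) by auto. ring.
Qed.

Lemma rerouted_col y : y <> y0 -> lsum Supp (fun z => kron (snd z) y * rerouted z) = q y0 y.
Proof.
  intros Hy. rewrite lsum_rerouted, <- (local_col rho y Hrho Hy). apply lsum_ext.
  intros [a b] _. unfold rerouted_weight. simpl.
  destruct (excluded_middle_informative (keep (a, b))); [reflexivity|].
  rewrite (kron_neq y0 y) by auto. ring.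
Qed.

Lemma rerouted_plan : transport_plan q x0 y0 (fun x y => rerouted (x, y)).
Proof.
  split; [|split; [|split]].
  - intros; apply rerouted_ge0.
  - exists Supp. intros [a b] H. apply rerouted_supp; auto.
  - intros x Hx. destruct (classic (In x (nbhd x0))) as [Hn|Hn].
    + rewrite (finsum_lsum (nbhd y0)); [|apply nbhd_NoDup|].
      * rewrite <- (lsum_row x rerouted Hn). apply rerouted_row; auto.
      * intros y H. apply rerouted_supp, in_Supp in H; tauto.
    + rewrite (finsum_lsum []); [symmetry; apply q_out_nbhd; auto|constructor|].
      intros y H. apply rerouted_supp, in_Supp in H; tauto.
  - intros y Hy. destruct (classic (In y (nbhd y0))) as [Hn|Hn].
    + rewrite (finsum_lsum (nbhd x0)); [|apply nbhd_NoDup|].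
      * rewrite <- (lsum_col y rerouted Hn). apply rerouted_col; auto.
      * intros x H. apply rerouted_supp, in_Supp in H; tauto.
    + rewrite (finsum_lsum []); [symmetry; apply q_out_nbhd; auto|constructor|].
      intros x H. apply rerouted_supp, in_Supp in H; tauto.
Qed.

(* Triangle inequality: rerouting a pair that is not kept does not lose gain. *)
Lemma reroute_gain p :
  In p Supp -> ~ keep p -> gain p <= gain (fst p, y0) + gain (x0, snd p).
Proof.
  destruct p as [a b]. intros Hp Hk. pose proof Hp as Hab. apply in_Supp in Hab.
  destruct Hab as [Ha Hb]. unfold keep in Hk; simpl in Hk. unfold gain; simpl.
  assert (Hn : (dist q a y0 + dist q x0 b <= dist q x0 y0 + dist q a b)%nat).
  { destruct (dist_nbhd _ _ Ha), (dist_nbhd _ _ Hb).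
    pose proof (dist_tri a b y0). pose proof (dist_tri x0 a b).
    pose proof (dist_tri a x0 y0). pose proof (dist_tri x0 y0 b).
    assert (Hc : (Z.abs (shift (a, b)) > 1)%Z \/ a = y1 \/ b = x1).
    { destruct (Z_gt_le_dec (Z.abs (shift (a, b))) 1); auto.
      destruct (eqd a y1); auto. destruct (eqd b x1); auto. tauto. }
    destruct Hc as [Hc|[->| ->]].
    - unfold shift in Hc; simpl in Hc. lia.
    - destruct Hy1 as [[_ E]|[_ [_ E]]]; [tauto|lia].
    - destruct Hx1 as [[_ E]|[_ [_ E]]]; [tauto|].
      rewrite (dist_sym x0 x1), (dist_sym y0 x0) in *. lia. }
  apply le_INR in Hn. rewrite !plus_INR in Hn. lra.
Qed.

Lemma rerouted_cost_ge : local_cost rho <= local_cost rerouted.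
Proof.
  unfold local_cost. rewrite lsum_rerouted. apply lsum_le. intros p Hp. unfold rerouted_weight.
  destruct (excluded_middle_informative (keep p)) as [|N]; [lra|].
  pose proof (reroute_gain p Hp N). pose proof (local_ge0 rho p Hrho Hp).
  rewrite Rmult_comm. apply Rmult_le_compat_l; auto.
Qed.

Lemma rerouted_optimal : optimal_plan q x0 y0 (fun x y => rerouted (x, y)).
Proof.
  split; [apply rerouted_plan|]. intros rho' TP.
  destruct (plan_local rho' TP) as [F ->].
  replace (cost q x0 y0 (fun x y => rerouted (x, y))) with (local_cost rerouted).
  - pose proof (Hopt _ F). pose proof rerouted_cost_ge. lra.
  - unfold cost, local_cost. symmetry. rewrite (finsum_lsum Supp); [|apply Supp_NoDup|].
    + apply lsum_ext. intros [a b] _. unfold gain; simpl; ring.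
    + intros [a b] H. simpl in H. apply rerouted_supp. intros E; apply H; rewrite E; ring.
Qed.

Definition shift_ind (k : Z) (z : V * V) : R := if Z.eq_dec (shift z) k then 1 else 0.

Lemma shift_ind_ge0 k z : 0 <= shift_ind k z.
Proof. unfold shift_ind; destruct (Z.eq_dec (shift z) k); lra. Qed.

Lemma mu_rerouted k :
  mu q x0 y0 (fun x y => rerouted (x, y)) k = lsum Supp (fun z => shift_ind k z * rerouted z).
Proof.
  unfold mu. rewrite (finsum_lsum Supp); [|apply Supp_NoDup|].
  - apply lsum_ext. intros [a b] _. unfold shift_ind, shift; simpl.
    destruct (Z.eq_dec _ k); ring.
  - intros [a b] H. simpl in H. destruct (Z.eq_dec _ k); [|congruence]. apply rerouted_supp; auto.
Qed.

Lemma rerouted_mu_large k : (Z.abs k > 1)%Z -> mu q x0 y0 (fun x y => rerouted (x, y)) k = 0.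
Proof.
  intros Hk. rewrite mu_rerouted, lsum_rerouted. apply lsum_zero. intros p Hp.
  assert (W : forall z, In z Supp -> (Z.abs (shift z) <= 1)%Z -> shift_ind k z = 0).
  { intros z Hz Hzk. unfold shift_ind. destruct (Z.eq_dec (shift z) k); [lia|reflexivity]. }
  unfold rerouted_weight. destruct (excluded_middle_informative (keep p)) as [K|K].
  - rewrite W; [ring|auto|].
    destruct K as [K|[K|[K _]]]; auto; apply shift_one_step; auto.
  - destruct p as [a b]. simpl. rewrite (W (a, y0)), (W (x0, b)); [ring| | | |].
    + eapply Supp_right; eauto.
    + apply shift_one_step; [eapply Supp_right; eauto|simpl; auto].
    + eapply Supp_left; eauto.
    + apply shift_one_step; [eapply Supp_left; eauto|simpl; auto].
Qed.

Section Distinct.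
Hypothesis Hne : x0 <> y0.

Lemma y1_adj : 0 < q x0 y1 /\ S (dist q y1 y0) = dist q x0 y0.
Proof. destruct Hy1 as [[E _]|[_ H]]; [contradiction|exact H]. Qed.

Lemma x1_adj : 0 < q y0 x1 /\ S (dist q x0 x1) = dist q x0 y0.
Proof.
  destruct Hx1 as [[E _]|[_ [Hq Hd]]]; [congruence|].
  rewrite dist_sym, (dist_sym y0 x0) in Hd. auto.
Qed.

Lemma y1_ne_x0 : y1 <> x0.
Proof. intros E. destruct y1_adj as [_ D]. rewrite E in D. lia. Qed.

Lemma x1_ne_y0 : x1 <> y0.
Proof. intros E. destruct x1_adj as [_ D]. rewrite E in D. lia. Qed.

Lemma kron_y1_le a : kron a y1 <= shift_ind (-1) (a, y0).
Proof.
  unfold kron, shift_ind, shift. simpl.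
  destruct (eqd a y1) as [->|]; [|destruct (Z.eq_dec _ _); lra].
  pose proof y1_adj. destruct (Z.eq_dec _ _); [lra|lia].
Qed.

Lemma kron_x1_le b : kron b x1 <= shift_ind (-1) (x0, b).
Proof.
  unfold kron, shift_ind, shift. simpl.
  destruct (eqd b x1) as [->|]; [|destruct (Z.eq_dec _ _); lra].
  pose proof x1_adj. destruct (Z.eq_dec _ _); [lra|lia].
Qed.

Lemma geodesic_rows_le p : In p Supp ->
  kron (fst p) y1 * rho p + kron (snd p) x1 * rho p <= rerouted_weight (shift_ind (-1)) p.
Proof.
  destruct p as [a b]. intros Hp. simpl. pose proof (local_ge0 rho _ Hrho Hp) as Hab.
  pose proof (kron_y1_le a). pose proof (kron_x1_le b).
  pose proof y1_ne_x0. pose proof x1_ne_y0.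
  unfold rerouted_weight. destruct (excluded_middle_informative (keep (a, b))) as [K|K].
  - destruct (eqd a y1) as [->|Na]; [|destruct (eqd b x1) as [->|Nb]].
    + assert (b = y0) by (destruct K as [K|[K|[_ [K _]]]]; simpl in K; congruence). subst b.
      rewrite kron_eq in *. rewrite (kron_neq y0 x1) by auto. nra.
    + assert (a = x0) by (destruct K as [K|[K|[_ [_ K]]]]; simpl in K; congruence). subst a.
      rewrite kron_eq in *. rewrite (kron_neq x0 y1) by auto. nra.
    + rewrite (kron_neq a y1), (kron_neq b x1) by auto.
      pose proof (Rmult_le_pos _ _ (shift_ind_ge0 (-1) (a, b)) Hab). lra.
  - simpl. pose proof (Rmult_le_compat_r _ _ _ Hab (kron_y1_le a)).
    pose proof (Rmult_le_compat_r _ _ _ Hab (kron_x1_le b)). lra.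
Qed.

Lemma rerouted_mu_minus1 : mu q x0 y0 (fun x y => rerouted (x, y)) (-1) >= 2 * qmin q.
Proof.
  rewrite mu_rerouted, lsum_rerouted.
  pose proof (lsum_le Supp _ _ geodesic_rows_le) as G.
  rewrite lsum_plus, (local_row rho y1 Hrho y1_ne_x0), (local_col rho x1 Hrho x1_ne_y0) in G.
  pose proof (qmin_le x0 y1 (proj1 y1_adj)). pose proof (qmin_le y0 x1 (proj1 x1_adj)). lra.
Qed.
End Distinct.

Lemma rerouted_laplacian_fst f :
  finsum (fun z => rerouted z * (tensor f (fun _ => 1) z - tensor f (fun _ => 1) (x0, y0))) =
  tensor (laplacian q f) (fun _ => 1) (x0, y0).
Proof.
  rewrite (finsum_lsum Supp); [|apply Supp_NoDup|].
  - unfold tensor; simpl. rewrite laplacian_lsum.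
    rewrite (lsum_ext Supp _ (fun z => (f (fst z) - f x0) * rerouted z)) by (intros; ring).
    rewrite (Supp_first_moment rerouted (fun a => f a - f x0)); [ring|ring|apply rerouted_row].
  - intros z H. apply rerouted_supp. intros E; apply H; rewrite E; ring.
Qed.

Lemma rerouted_laplacian_snd f :
  finsum (fun z => rerouted z * (tensor (fun _ => 1) f z - tensor (fun _ => 1) f (x0, y0))) =
  tensor (fun _ => 1) (laplacian q f) (x0, y0).
Proof.
  rewrite (finsum_lsum Supp); [|apply Supp_NoDup|].
  - unfold tensor; simpl. rewrite laplacian_lsum.
    rewrite (lsum_ext Supp _ (fun z => (f (snd z) - f y0) * rerouted z)) by (intros; ring).
    rewrite (Supp_second_moment rerouted (fun b => f b - f y0)); [ring|ring|apply rerouted_col].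
  - intros z H. apply rerouted_supp. intros E; apply H; rewrite E; ring.
Qed.
End Reroute.

Definition perfect_row (r : V * V -> R) : Prop :=
  (forall z, 0 <= r z) /\ has_fin_supp r /\
  optimal_plan q x0 y0 (fun x y => r (x, y)) /\
  (forall k, (Z.abs k > 1)%Z -> mu q x0 y0 (fun x y => r (x, y)) k = 0) /\
  (x0 <> y0 -> mu q x0 y0 (fun x y => r (x, y)) (-1) >= 2 * qmin q) /\
  (forall f, finsum (fun z => r z * (tensor f (fun _ => 1) z - tensor f (fun _ => 1) (x0, y0))) =
             tensor (laplacian q f) (fun _ => 1) (x0, y0)) /\
  (forall f, finsum (fun z => r z * (tensor (fun _ => 1) f z - tensor (fun _ => 1) f (x0, y0))) =
             tensor (fun _ => 1) (laplacian q f) (x0, y0)).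

Lemma perfect_row_exists : exists r, perfect_row r.
Proof.
  destruct local_optimum_exists as [rho [Hrho Hopt]].
  destruct (geodesic_step_exists x0 y0) as [y1 Hy1].
  destruct (geodesic_step_exists y0 x0) as [x1 Hx1].
  exists (rerouted y1 x1 rho). unfold perfect_row.
  refine (conj _ (conj _ (conj _ (conj _ (conj _ (conj _ _)))))).
  - apply rerouted_ge0; auto.
  - exists Supp. apply rerouted_supp.
  - apply rerouted_optimal; auto.
  - apply rerouted_mu_large.
  - apply rerouted_mu_minus1; auto.
  - apply rerouted_laplacian_fst; auto.
  - apply rerouted_laplacian_snd; auto.
Qed.
End Pair.
End Graph.

Theorem mainTheorem3 (V : Type) (q : V -> V -> R)
  (HV : countable V) (Hg : is_graph q)
  (Hrev : reversible q) (Hconn : connected q) :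
  exists qt : V * V -> V * V -> R, perfect_coupling q qt.
Proof.
  pose (qt := fun a : V * V =>
    epsilon (inhabits (fun _ : V * V => 0)) (perfect_row V q (fst a) (snd a))).
  assert (Hqt : forall a, perfect_row V q (fst a) (snd a) (qt a)).
  { intros a. apply epsilon_spec, perfect_row_exists; auto. }
  exists qt. split; [split; [split|split]|].
  - intros a. apply (Hqt a).
  - intros a. apply (Hqt a).
  - intros f. apply functional_extensionality. intros [x0 y0]. apply (Hqt (x0, y0)).
  - intros f. apply functional_extensionality. intros [x0 y0]. apply (Hqt (x0, y0)).
  - intros x0 y0. destruct (Hqt (x0, y0)) as [_ [_ [Hopt [Hmu [Hmu1 _]]]]]. auto.
Qed.
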